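(* Let $Q$ be an equivariantly supported quantal frame with base locale $A$. The following conditions are equivalent: (1) $Q\cong R(Q)\otimes_{T(Q)}L(Q)$ in the category $\mathbf{Frm}$ of frames. (2) For each frame $S$ and frame homomorphisms $h:R(Q)\to S$ and $k:L(Q)\to S$ whose restrictions to $T(Q)$ coincide, there is a unique frame homomorphism $t:Q\to S$ whose restriction to $R(Q)$ is $h$ and whose restriction to $L(Q)$ is $k$. (3) The triple $(Q,\ a\mapsto a\triangleright 1_Q,\ a\mapsto 1_Q\triangleleft a)$ is the cokernel pair in $\mathbf{Frm}$ of the inclusion $E\to A$, where $E=\{a\in A\mid a\triangleright 1_Q=1_Q\triangleleft a\}$.
   Context: For a locale (frame) $A$, an $A$-$A$-bimodule is a sup-lattice $M$ with actions $(a,m)\mapsto a\triangleright m$ and $(m,a)\mapsto m\triangleleft a$ preserving joins in each variable, with $1_A\triangleright m=m$, $(a\wedge b)\triangleright m=a\triangleright(b\triangleright m)$, $m\triangleleft1_A=m$, $m\triangleleft(a\wedge b)=(m\triangleleft a)\triangleleft b$, $(a\triangleright m)\triangleleft b=a\triangleright(m\triangleleft b)$. An $A$-$A$-quantale is such a $Q$ with an associative multiplication preserving joins in each variable and $(a\triangleright x)y=a\triangleright(xy)$, $(x\triangleleft a)y=x(a\triangleright y)$, $(xy)\triangleleft a=x(y\triangleleft a)$; involutive if there is a join-preserving $x\mapsto x^*$ with $x^{**}=x$, $(xy)^*=y^*x^*$, $(a\triangleright(x\triangleleft b))^*=b\triangleright(x^*\triangleleft a)$. $1_Q$ is the top of $Q$.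 A support is a join-preserving $\varsigma:Q\to A$ with $\varsigma(1_Q)=1_A$, $\varsigma(x)\triangleright y\le xx^*y$, $\varsigma(x)\triangleright x=x$; it is equivariant if $\varsigma(a\triangleright x)=a\wedge\varsigma(x)$. An equivariantly supported quantal frame is an involutive $A$-$A$-quantale $Q$ with an equivariant support whose lattice is a frame and such that $(a\triangleright x)\wedge y=a\triangleright(x\wedge y)$ and $(x\triangleleft a)\wedge y=(x\wedge y)\triangleleft a$. $R(Q)=\{x\in Q\mid x1_Q\le x\}$ (right-sided elements), $L(Q)=\{x^*\mid x\in R(Q)\}$, $T(Q)=R(Q)\cap L(Q)$; these are frames, and $R(Q)\otimes_{T(Q)}L(Q)$ denotes the pushout in $\mathbf{Frm}$ of the inclusions $T(Q)\to R(Q)$ and $T(Q)\to L(Q)$. *)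

From Stdlib Require Import ProofIrrelevance.

Set Implicit Arguments.

Definition img {T U : Type} (f : T -> U) (X : T -> Prop) : U -> Prop :=
  fun y => exists x, X x /\ y = f x.

Record Frame := {
  fcar :> Type;
  fle : fcar -> fcar -> Prop;
  fsup : (fcar -> Prop) -> fcar;
  fmeet : fcar -> fcar -> fcar;
  ftop : fcar;
  fle_refl : forall x, fle x x;
  fle_trans : forall x y z, fle x y -> fle y z -> fle x z;
  fle_antisym : forall x y, fle x y -> fle y x -> x = y;
  fsup_ub : forall X x, X x -> fle x (fsup X);
  fsup_least : forall X y, (forall x, X x -> fle x y) -> fle (fsup X) y;
  fmeet_lb1 : forall x y, fle (fmeet x y) x;
  fmeet_lb2 : forall x y, fle (fmeet x y) y;
  fmeet_glb : forall x y z, fle z x -> fle z y -> fle z (fmeet x y);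
  ftop_max : forall x, fle x ftop;
  fdistr : forall a X, fmeet a (fsup X) = fsup (img (fmeet a) X)
}.

Arguments fle {f}.
Arguments fsup {f}.
Arguments fmeet {f}.
Arguments ftop {f}.

Definition frame_hom (F G : Frame) (f : F -> G) : Prop :=
  f ftop = ftop /\
  (forall x y, f (fmeet x y) = fmeet (f x) (f y)) /\
  (forall X, f (fsup X) = fsup (img f X)).

Arguments frame_hom {F G} f.

Definition frame_iso (F G : Frame) (f : F -> G) : Prop :=
  frame_hom f /\
  exists g : G -> F, frame_hom g /\ (forall x, g (f x) = x) /\ (forall y, f (g y) = y).

Arguments frame_iso {F G} f.

Definition pushout_univ (T R L P : Frame) (a : T -> R) (b : T -> L)
  (i : R -> P) (j : L -> P) : Prop :=
  forall (S : Frame) (h : R -> S) (k : L -> S),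
    frame_hom h -> frame_hom k -> (forall t, h (a t) = k (b t)) ->
    exists t : P -> S,
      (frame_hom t /\ (forall x, t (i x) = h x) /\ (forall y, t (j y) = k y)) /\
      (forall t' : P -> S,
         frame_hom t' -> (forall x, t' (i x) = h x) -> (forall y, t' (j y) = k y) ->
         forall z, t' z = t z).

Arguments pushout_univ {T R L P} a b i j.

Definition is_pushout (T R L P : Frame) (a : T -> R) (b : T -> L)
  (i : R -> P) (j : L -> P) : Prop :=
  frame_hom i /\ frame_hom j /\ (forall t, i (a t) = j (b t)) /\
  pushout_univ a b i j.

Arguments is_pushout {T R L P} a b i j.

Lemma fsup_ext (F : Frame) (X Y : F -> Prop) :
  (forall y, X y <-> Y y) -> fsup X = fsup Y.
Proof.
  intros H; apply fle_antisym; apply fsup_least; intros x Hx;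
  apply fsup_ub; apply H; exact Hx.
Qed.

Section SubFrame.
Variable F : Frame.
Variable P : F -> Prop.
Hypothesis Psup : forall X, (forall x, X x -> P x) -> P (fsup X).
Hypothesis Pmeet : forall x y, P x -> P y -> P (fmeet x y).
Hypothesis Ptop : P ftop.

Definition sub_car := { x : F | P x }.
Definition sub_le (x y : sub_car) := fle (proj1_sig x) (proj1_sig y).
Definition sub_sup (X : sub_car -> Prop) : sub_car :=
  exist _ (fsup (img (@proj1_sig _ _) X))
    (Psup _ (fun y Hy => match Hy with ex_intro _ x (conj _ e) =>
             eq_ind_r P (proj2_sig x) e end)).
Definition sub_meet (x y : sub_car) : sub_car :=
  exist _ (fmeet (proj1_sig x) (proj1_sig y)) (Pmeet (proj2_sig x) (proj2_sig y)).
Definition sub_top : sub_car := exist _ ftop Ptop.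

Lemma sub_eq (x y : sub_car) : proj1_sig x = proj1_sig y -> x = y.
Proof.
  destruct x as [x px], y as [y py]; simpl; intros e; subst y.
  f_equal; apply proof_irrelevance.
Qed.

Definition SubFrame : Frame.
Proof.
  refine (@Build_Frame sub_car sub_le sub_sup sub_meet sub_top _ _ _ _ _ _ _ _ _ _);
  unfold sub_le, sub_sup, sub_meet, sub_top; simpl.
  - intros; apply fle_refl.
  - intros x y z; apply fle_trans.
  - intros x y H1 H2; apply sub_eq; apply fle_antisym; assumption.
  - intros X x Hx; apply fsup_ub; exists x; split; auto.
  - intros X y H; apply fsup_least; intros z [x [Hx ->]]; apply H; exact Hx.
  - intros; apply fmeet_lb1.
  - intros; apply fmeet_lb2.
  - intros; apply fmeet_glb; assumption.
  - intros; apply ftop_max.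
  - intros a X; apply sub_eq; simpl. rewrite fdistr. apply fsup_ext.
    intros y; split.
    + intros [z [[x [Hx ->]] ->]]. exists (sub_meet a x); split.
      * exists x; split; auto.
      * reflexivity.
    + intros [z [[x [Hx ->]] ->]]. exists (proj1_sig x); split.
      * exists x; split; auto.
      * reflexivity.
Defined.
End SubFrame.

Record EqSuppQuantalFrame (A : Frame) := {
  Qf :> Frame;
  lact : A -> Qf -> Qf;
  ract : Qf -> A -> Qf;
  qmul : Qf -> Qf -> Qf;
  qinv : Qf -> Qf;
  supp : Qf -> A;
  lact_supl : forall X m, lact (fsup X) m = fsup (img (fun a => lact a m) X);
  lact_supr : forall a X, lact a (fsup X) = fsup (img (lact a) X);
  ract_supl : forall X a, ract (fsup X) a = fsup (img (fun m => ract m a) X);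
  ract_supr : forall m X, ract m (fsup X) = fsup (img (ract m) X);
  lact_top : forall m, lact ftop m = m;
  lact_meet : forall a b m, lact (fmeet a b) m = lact a (lact b m);
  ract_top : forall m, ract m ftop = m;
  ract_meet : forall m a b, ract m (fmeet a b) = ract (ract m a) b;
  act_assoc : forall a m b, ract (lact a m) b = lact a (ract m b);
  qmul_assoc : forall x y z, qmul (qmul x y) z = qmul x (qmul y z);
  qmul_supl : forall X y, qmul (fsup X) y = fsup (img (fun x => qmul x y) X);
  qmul_supr : forall x Y, qmul x (fsup Y) = fsup (img (qmul x) Y);
  qmul_lact : forall a x y, qmul (lact a x) y = lact a (qmul x y);
  qmul_ract_lact : forall x a y, qmul (ract x a) y = qmul x (lact a y);
  qmul_ract : forall x y a, ract (qmul x y) a = qmul x (ract y a);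
  qinv_sup : forall X, qinv (fsup X) = fsup (img qinv X);
  qinv_inv : forall x, qinv (qinv x) = x;
  qinv_mul : forall x y, qinv (qmul x y) = qmul (qinv y) (qinv x);
  qinv_act : forall a x b, qinv (lact a (ract x b)) = lact b (ract (qinv x) a);
  supp_sup : forall X, supp (fsup X) = fsup (img supp X);
  supp_top : supp ftop = ftop;
  supp_le : forall x y, fle (lact (supp x) y) (qmul (qmul x (qinv x)) y);
  supp_fix : forall x, lact (supp x) x = x;
  supp_equiv : forall a x, supp (lact a x) = fmeet a (supp x);
  lact_meet_compat : forall a x y, fmeet (lact a x) y = lact a (fmeet x y);
  ract_meet_compat : forall a x y, fmeet (ract x a) y = ract (fmeet x y) a
}.

Arguments lact {A _}.
Arguments ract {A _}.
Arguments qmul {A _}.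
Arguments qinv {A _}.
Arguments supp {A _}.

Section RLT.
Variable A : Frame.
Variable Q : EqSuppQuantalFrame A.

Definition Rpred (x : Q) : Prop := fle (qmul x ftop) x.
Definition Lpred (y : Q) : Prop := exists x, Rpred x /\ y = qinv x.
Definition Tpred (x : Q) : Prop := Rpred x /\ Lpred x.

Lemma qmul_mono_l (x x' y : Q) : fle x x' -> fle (qmul x y) (qmul x' y).
Proof.
  intros H.
  assert (E : x' = fsup (fun z => z = x \/ z = x')).
  { apply fle_antisym.
    - apply fsup_ub; right; reflexivity.
    - apply fsup_least; intros z [-> | ->]; [exact H | apply fle_refl]. }
  rewrite E, qmul_supl. apply fsup_ub. exists x; split; auto.
Qed.

Lemma qinv_mono (x y : Q) : fle x y -> fle (qinv x) (qinv y).
Proof.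
  intros H.
  assert (E : y = fsup (fun z => z = x \/ z = y)).
  { apply fle_antisym.
    - apply fsup_ub; right; reflexivity.
    - apply fsup_least; intros z [-> | ->]; [exact H | apply fle_refl]. }
  rewrite E, qinv_sup. apply fsup_ub. exists x; split; auto.
Qed.

Lemma qinv_le (x y : Q) : fle (qinv x) y <-> fle x (qinv y).
Proof.
  split; intros H.
  - rewrite <- (qinv_inv Q x). apply qinv_mono; exact H.
  - rewrite <- (qinv_inv Q y). apply qinv_mono; exact H.
Qed.

Lemma qinv_meet (x y : Q) : qinv (fmeet x y) = fmeet (qinv x) (qinv y).
Proof.
  apply fle_antisym.
  - apply fmeet_glb; apply qinv_mono; [apply fmeet_lb1 | apply fmeet_lb2].
  - apply qinv_le. apply fmeet_glb; apply qinv_le;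
      [apply fmeet_lb1 | apply fmeet_lb2].
Qed.

Lemma qinv_top : qinv (ftop : Q) = ftop.
Proof.
  apply fle_antisym; [apply ftop_max|]. apply qinv_le. apply ftop_max.
Qed.

Lemma Rsup : forall X, (forall x, X x -> Rpred x) -> Rpred (fsup X).
Proof.
  intros X HX; unfold Rpred. rewrite qmul_supl. apply fsup_least.
  intros z [x [Hx ->]]. eapply fle_trans; [apply HX; exact Hx|].
  apply fsup_ub; exact Hx.
Qed.

Lemma Rmeet : forall x y, Rpred x -> Rpred y -> Rpred (fmeet x y).
Proof.
  intros x y Hx Hy; unfold Rpred in *. apply fmeet_glb.
  - eapply fle_trans; [apply qmul_mono_l, fmeet_lb1 | exact Hx].
  - eapply fle_trans; [apply qmul_mono_l, fmeet_lb2 | exact Hy].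
Qed.

Lemma Rtop : Rpred ftop.
Proof. unfold Rpred; apply ftop_max. Qed.

Lemma Lsup : forall X, (forall x, X x -> Lpred x) -> Lpred (fsup X).
Proof.
  intros X HX. exists (fsup (img qinv X)). split.
  - apply Rsup. intros z [x [Hx ->]]. destruct (HX x Hx) as [w [Hw ->]].
    rewrite qinv_inv; exact Hw.
  - rewrite qinv_sup. apply fsup_ext. intros y; split.
    + intros Hy. exists (qinv y); split; [exists y; split; auto|].
      rewrite qinv_inv; reflexivity.
    + intros [z [[x [Hx ->]] ->]]. rewrite qinv_inv; exact Hx.
Qed.

Lemma Lmeet : forall x y, Lpred x -> Lpred y -> Lpred (fmeet x y).
Proof.
  intros x y [u [Hu ->]] [v [Hv ->]]. exists (fmeet u v); split.
  - apply Rmeet; assumption.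
  - symmetry; apply qinv_meet.
Qed.

Lemma Ltop : Lpred ftop.
Proof. exists ftop; split; [apply Rtop | symmetry; apply qinv_top]. Qed.

Lemma Tsup : forall X, (forall x, X x -> Tpred x) -> Tpred (fsup X).
Proof.
  intros X HX; split; [apply Rsup | apply Lsup]; intros x Hx; apply HX; exact Hx.
Qed.

Lemma Tmeet : forall x y, Tpred x -> Tpred y -> Tpred (fmeet x y).
Proof.
  intros x y [? ?] [? ?]; split; [apply Rmeet | apply Lmeet]; assumption.
Qed.

Lemma Ttop : Tpred ftop.
Proof. split; [apply Rtop | apply Ltop]. Qed.

Definition RQ : Frame := @SubFrame _ _ Rsup Rmeet Rtop.
Definition LQ : Frame := @SubFrame _ _ Lsup Lmeet Ltop.
Definition TQ : Frame := @SubFrame _ _ Tsup Tmeet Ttop.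

Definition incTR (t : TQ) : RQ :=
  exist Rpred (proj1_sig t) (proj1 (proj2_sig t)).
Definition incTL (t : TQ) : LQ :=
  exist Lpred (proj1_sig t) (proj2 (proj2_sig t)).
Definition incRQ (x : RQ) : Q := proj1_sig x.
Definition incLQ (y : LQ) : Q := proj1_sig y.

Definition Epred (a : A) : Prop := lact a (ftop : Q) = ract (ftop : Q) a.

Lemma Esup : forall X, (forall x, X x -> Epred x) -> Epred (fsup X).
Proof.
  intros X HX; unfold Epred. rewrite lact_supl, ract_supr. apply fsup_ext.
  intros y; split; intros [a [Ha ->]]; exists a; split; auto;
    rewrite (HX a Ha); reflexivity.
Qed.

Lemma Emeet : forall a b, Epred a -> Epred b -> Epred (fmeet a b).
Proof.
  intros a b Ha Hb; unfold Epred in *.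
  rewrite lact_meet, ract_meet, Hb, <- act_assoc, Ha. reflexivity.
Qed.

Lemma Etop : Epred ftop.
Proof. unfold Epred; rewrite lact_top, ract_top; reflexivity. Qed.

Definition EA : Frame := @SubFrame _ _ Esup Emeet Etop.
Definition incEA (e : EA) : A := proj1_sig e.

Definition uQ (a : A) : Q := lact a ftop.
Definition vQ (a : A) : Q := ract ftop a.

End RLT.

Arguments RQ {A} Q.
Arguments LQ {A} Q.
Arguments TQ {A} Q.
Arguments EA {A} Q.
Arguments incTR {A Q}.
Arguments incTL {A Q}.
Arguments incRQ {A Q}.
Arguments incLQ {A Q}.
Arguments incEA {A Q}.
Arguments uQ {A} Q a.
Arguments vQ {A} Q a.

(* R(Q) and L(Q) are both copies of A: a right-sided x is recovered as
   [supp x |> 1], so [a |-> a |> 1] and [a |-> 1 <| a] are frame isomorphisms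
   A -> R(Q) and A -> L(Q), the second being the first followed by the
   involution.  Since [a |> 1 = 1 <| b] forces [a = b], an element of T(Q) is
   exactly some [a |> 1 = 1 <| a] with a in E, so these isomorphisms carry the
   span T(Q) -> R(Q), L(Q) onto the span E -> A, A and the cocone of
   inclusions into Q onto the cocone [a |-> a |> 1], [a |-> 1 <| a].  The
   universal property of a pushout is invariant under such a change of span
   and under isomorphism of the apex, which gives all the equivalences. *)
From Stdlib Require Import Setoid.

Set Implicit Arguments.

Lemma fmeet_top_l (F : Frame) (x : F) : fmeet ftop x = x.
Proof.
  apply fle_antisym; [apply fmeet_lb2 |].
  apply fmeet_glb; [apply ftop_max | apply fle_refl].
Qed.

Lemma fmeet_top_r (F : Frame) (x : F) : fmeet x ftop = x.
Proof.
  apply fle_antisym; [apply fmeet_lb1 |].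
  apply fmeet_glb; [apply fle_refl | apply ftop_max].
Qed.

Lemma fsup_img_comp (F G : Type) (H : Frame) (f : F -> G) (g : G -> H) (X : F -> Prop) :
  fsup (img g (img f X)) = fsup (img (fun x => g (f x)) X).
Proof.
  apply fsup_ext; intros y; split.
  - intros [z [[x [Hx ->]] ->]]; exists x; auto.
  - intros [x [Hx ->]]; exists (f x); split; [exists x; auto | reflexivity].
Qed.

Lemma fsup_hom_mono (F G : Frame) (f : F -> G) :
  (forall X, f (fsup X) = fsup (img f X)) -> forall x y, fle x y -> fle (f x) (f y).
Proof.
  intros Hf x y Hxy.
  assert (Ey : y = fsup (fun z => z = x \/ z = y)).
  { apply fle_antisym; [apply fsup_ub; right; reflexivity |].
    apply fsup_least; intros z [-> | ->]; [exact Hxy | apply fle_refl]. }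
  rewrite Ey, Hf. apply fsup_ub. exists x; split; auto.
Qed.

Lemma frame_hom_id (F : Frame) : frame_hom (fun x : F => x).
Proof.
  split; [reflexivity | split; [reflexivity |]].
  intros X; apply fsup_ext; intros y; split.
  - intros Hy; exists y; auto.
  - intros [x [Hx ->]]; exact Hx.
Qed.

Lemma frame_hom_comp (F G H : Frame) (f : F -> G) (g : G -> H) :
  frame_hom f -> frame_hom g -> frame_hom (fun x => g (f x)).
Proof.
  intros [f_top [f_meet f_sup]] [g_top [g_meet g_sup]]; split; [| split].
  - rewrite f_top; exact g_top.
  - intros x y; rewrite f_meet; apply g_meet.
  - intros X; rewrite f_sup, g_sup; apply fsup_img_comp.
Qed.

Lemma frame_hom_ext {F G : Frame} {f g : F -> G} :
  (forall x, f x = g x) -> frame_hom f -> frame_hom g.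
Proof.
  intros Efg [f_top [f_meet f_sup]]; split; [| split].
  - rewrite <- Efg; exact f_top.
  - intros x y; rewrite <- !Efg; apply f_meet.
  - intros X; rewrite <- Efg, f_sup; apply fsup_ext; intros y; split;
      intros [x [Hx ->]]; exists x; split; auto.
Qed.

Lemma frame_hom_inverse {F G : Frame} {f : F -> G} {g : G -> F} :
  frame_hom f -> (forall x, g (f x) = x) -> (forall y, f (g y) = y) -> frame_hom g.
Proof.
  intros [f_top [f_meet f_sup]] gf fg; split; [| split].
  - rewrite <- f_top; apply gf.
  - intros x y; rewrite <- (fg x), <- (fg y), <- f_meet, !gf; reflexivity.
  - intros Y; rewrite <- (gf (fsup (img g Y))), f_sup, fsup_img_comp.
    f_equal; apply fsup_ext; intros y; split.
    + intros Hy; exists y; rewrite fg; auto.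
    + intros [x [Hx ->]]; rewrite fg; exact Hx.
Qed.

Lemma frame_iso_id (F : Frame) : frame_iso (fun x : F => x).
Proof.
  split; [apply frame_hom_id |].
  exists (fun x => x); split; [apply frame_hom_id | split; reflexivity].
Qed.

Section SubFrameMaps.
Variables (F G : Frame) (P : F -> Prop).
Hypothesis Psup : forall X, (forall x, X x -> P x) -> P (fsup X).
Hypothesis Pmeet : forall x y, P x -> P y -> P (fmeet x y).
Hypothesis Ptop : P ftop.

Lemma frame_hom_val : frame_hom (fun x : SubFrame F P Psup Pmeet Ptop => proj1_sig x).
Proof. split; [reflexivity | split; reflexivity]. Qed.

Lemma frame_hom_corestrict (f : G -> SubFrame F P Psup Pmeet Ptop) :
  frame_hom (fun x => proj1_sig (f x)) -> frame_hom f.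
Proof.
  intros [f_top [f_meet f_sup]]; split; [| split]; intros;
    apply sub_eq; simpl; [exact f_top | apply f_meet |].
  rewrite f_sup; symmetry; apply fsup_img_comp.
Qed.
End SubFrameMaps.

Lemma pushout_univ_iso {T R L P P' : Frame} {a : T -> R} {b : T -> L}
    {i : R -> P} {j : L -> P} {i' : R -> P'} {j' : L -> P'} {phi : P -> P'} :
  pushout_univ a b i j -> frame_iso phi ->
  (forall x, phi (i x) = i' x) -> (forall y, phi (j y) = j' y) ->
  pushout_univ a b i' j'.
Proof.
  intros Hu [phi_hom [psi [psi_hom [psi_phi phi_psi]]]] Ei Ej S h k Hh Hk Hhk.
  destruct (Hu S h k Hh Hk Hhk) as [u [[u_hom [u_i u_j]] u_uniq]].
  exists (fun z => u (psi z)); split; [split; [| split] |].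
  - exact (frame_hom_comp psi_hom u_hom).
  - intros x; rewrite <- Ei, psi_phi; apply u_i.
  - intros y; rewrite <- Ej, psi_phi; apply u_j.
  - intros v v_hom v_i v_j z.
    transitivity (v (phi (psi z))); [rewrite phi_psi; reflexivity |].
    apply (u_uniq (fun p => v (phi p))); [exact (frame_hom_comp phi_hom v_hom) | |];
      intros; [rewrite Ei | rewrite Ej]; auto.
Qed.

Lemma pushout_univ_transfer {T R L P T' R' L' : Frame}
    {a : T -> R} {b : T -> L} {i : R -> P} {j : L -> P}
    {a' : T' -> R'} {b' : T' -> L'} {i' : R' -> P} {j' : L' -> P}
    {r : R' -> R} {l : L' -> L} :
  pushout_univ a' b' i' j' -> frame_hom r -> frame_hom l ->
  (forall x, exists y, r y = x) -> (forall x, exists y, l y = x) ->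
  (forall y, i (r y) = i' y) -> (forall y, j (l y) = j' y) ->
  (forall t', exists t, a t = r (a' t') /\ b t = l (b' t')) ->
  pushout_univ a b i j.
Proof.
  intros Hu r_hom l_hom r_surj l_surj Ei Ej span S h k Hh Hk Hhk.
  destruct (Hu S (fun y => h (r y)) (fun y => k (l y))
              (frame_hom_comp r_hom Hh) (frame_hom_comp l_hom Hk))
    as [u [[u_hom [u_i u_j]] u_uniq]].
  { intros t'; destruct (span t') as [t [Ea Eb]]; rewrite <- Ea, <- Eb; apply Hhk. }
  exists u; split; [split; [exact u_hom | split] |].
  - intros x; destruct (r_surj x) as [y <-]; rewrite Ei; apply u_i.
  - intros x; destruct (l_surj x) as [y <-]; rewrite Ej; apply u_j.
  - intros v v_hom v_i v_j; apply u_uniq; [exact v_hom | |];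
      intros y; [rewrite <- Ei | rewrite <- Ej]; auto.
Qed.

Section SupportedQuantalFrame.
Variables (A : Frame) (Q : EqSuppQuantalFrame A).

Lemma lact_mono (a : A) (x y : Q) : fle x y -> fle (lact a x) (lact a y).
Proof. apply fsup_hom_mono; intros; apply lact_supr. Qed.

Lemma qmul_mono_r (x y y' : Q) : fle y y' -> fle (qmul x y) (qmul x y').
Proof. apply fsup_hom_mono; intros; apply qmul_supr. Qed.

Lemma supp_mono (x y : Q) : fle x y -> fle (supp x) (supp y).
Proof. apply fsup_hom_mono; intros; apply supp_sup. Qed.

Lemma le_qmul_qinv (x : Q) : fle x (qmul (qmul x (qinv x)) x).
Proof. rewrite <- (supp_fix Q x) at 1; apply supp_le. Qed.

Lemma le_qmul_top_r (x : Q) : fle x (qmul x ftop).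
Proof.
  eapply fle_trans; [apply le_qmul_qinv |].
  rewrite qmul_assoc; apply qmul_mono_r, ftop_max.
Qed.

Lemma le_qmul_top_l (x : Q) : fle x (qmul ftop x).
Proof.
  eapply fle_trans; [apply le_qmul_qinv |].
  apply qmul_mono_l, ftop_max.
Qed.

Lemma qmul_top_r_supp (x : Q) : qmul x ftop = uQ Q (supp x).
Proof.
  unfold uQ; apply fle_antisym.
  - rewrite <- (supp_fix Q x) at 1; rewrite qmul_lact.
    apply lact_mono, ftop_max.
  - eapply fle_trans; [apply supp_le |].
    rewrite qmul_assoc; apply qmul_mono_r, ftop_max.
Qed.

Lemma right_sided_uQ (a : A) : Rpred Q (uQ Q a).
Proof. unfold Rpred, uQ; rewrite qmul_lact; apply lact_mono, ftop_max. Qed.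

Lemma right_sided_eq {x : Q} : Rpred Q x -> uQ Q (supp x) = x.
Proof.
  intros Rx; rewrite <- qmul_top_r_supp.
  apply fle_antisym; [exact Rx | apply le_qmul_top_r].
Qed.

Lemma supp_uQ (a : A) : supp (uQ Q a) = a.
Proof. unfold uQ; rewrite supp_equiv, supp_top; apply fmeet_top_r. Qed.

Lemma qinv_uQ (a : A) : qinv (uQ Q a) = vQ Q a.
Proof.
  unfold uQ, vQ; rewrite <- (ract_top Q ftop) at 1.
  rewrite qinv_act, qinv_top, lact_top; reflexivity.
Qed.

Lemma qinv_vQ (a : A) : qinv (vQ Q a) = uQ Q a.
Proof. rewrite <- qinv_uQ; apply qinv_inv. Qed.

Lemma left_sided_vQ (a : A) : Lpred Q (vQ Q a).
Proof. exists (uQ Q a); split; [apply right_sided_uQ | symmetry; apply qinv_uQ]. Qed.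

Lemma left_sided_eq (y : Q) : Lpred Q y -> vQ Q (supp (qinv y)) = y.
Proof.
  intros [x [Rx ->]]; rewrite qinv_inv, <- qinv_uQ, right_sided_eq; auto.
Qed.

Lemma uQ_hom : frame_hom (uQ Q).
Proof.
  unfold uQ; split; [| split].
  - apply lact_top.
  - intros a b; rewrite lact_meet, lact_meet_compat, fmeet_top_l; reflexivity.
  - intros X; apply lact_supl.
Qed.

Lemma vQ_hom : frame_hom (vQ Q).
Proof.
  apply (frame_hom_ext qinv_uQ).
  apply frame_hom_comp; [exact uQ_hom |].
  split; [apply qinv_top | split; [apply qinv_meet | apply qinv_sup]].
Qed.

(* [b |> 1 <= 1 (b |> 1) = (1 <| b) 1 = supp (1 <| b) |> 1]; now apply [supp]. *)
Lemma le_supp_vQ (b : A) : fle b (supp (vQ Q b)).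
Proof.
  rewrite <- (supp_uQ b) at 1; rewrite <- (supp_uQ (supp (vQ Q b))).
  apply supp_mono; rewrite <- qmul_top_r_supp.
  unfold vQ; rewrite qmul_ract_lact; apply le_qmul_top_l.
Qed.

Lemma uQ_eq_vQ (a b : A) : uQ Q a = vQ Q b -> a = b.
Proof.
  intros E; apply fle_antisym.
  - rewrite <- (supp_uQ b), <- qinv_vQ, <- E, qinv_uQ; apply le_supp_vQ.
  - rewrite <- (supp_uQ a), E; apply le_supp_vQ.
Qed.

Lemma two_sided_eq (x : Q) : Tpred Q x -> uQ Q (supp x) = x /\ vQ Q (supp x) = x.
Proof.
  intros [Rx Lx]; split; [apply right_sided_eq; exact Rx |].
  rewrite <- (left_sided_eq Lx) at 2; f_equal.
  apply uQ_eq_vQ; rewrite (right_sided_eq Rx); symmetry; apply left_sided_eq; exact Lx.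
Qed.

Definition uR (a : A) : RQ Q := exist (Rpred Q) (uQ Q a) (right_sided_uQ a).
Definition vL (a : A) : LQ Q := exist (Lpred Q) (vQ Q a) (left_sided_vQ a).
Definition suppR (x : RQ Q) : A := supp (incRQ x).
Definition suppL (y : LQ Q) : A := supp (qinv (incLQ y)).

Lemma suppR_uR (a : A) : suppR (uR a) = a.
Proof. apply supp_uQ. Qed.

Lemma uR_suppR (x : RQ Q) : uR (suppR x) = x.
Proof. apply sub_eq, right_sided_eq, (proj2_sig x). Qed.

Lemma suppL_vL (a : A) : suppL (vL a) = a.
Proof. unfold suppL; simpl; rewrite qinv_vQ; apply supp_uQ. Qed.

Lemma vL_suppL (y : LQ Q) : vL (suppL y) = y.
Proof. apply sub_eq, left_sided_eq, (proj2_sig y). Qed.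

Lemma uR_hom : frame_hom uR.
Proof. apply frame_hom_corestrict, uQ_hom. Qed.

Lemma vL_hom : frame_hom vL.
Proof. apply frame_hom_corestrict, vQ_hom. Qed.

Lemma suppR_hom : frame_hom suppR.
Proof. exact (frame_hom_inverse uR_hom suppR_uR uR_suppR). Qed.

Lemma suppL_hom : frame_hom suppL.
Proof. exact (frame_hom_inverse vL_hom suppL_vL vL_suppL). Qed.

Lemma EA_in_TQ (e : EA Q) :
  exists t : TQ Q, incTR t = uR (incEA e) /\ incTL t = vL (incEA e).
Proof.
  assert (Ee : uQ Q (incEA e) = vQ Q (incEA e)) by exact (proj2_sig e).
  assert (Te : Tpred Q (uQ Q (incEA e))).
  { split; [apply right_sided_uQ | rewrite Ee; apply left_sided_vQ]. }
  exists (exist _ _ Te); split; apply sub_eq; [reflexivity | exact Ee].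
Qed.

Lemma TQ_in_EA (t : TQ Q) :
  exists e : EA Q, incEA e = suppR (incTR t) /\ incEA e = suppL (incTL t).
Proof.
  destruct t as [x Tx]; destruct (two_sided_eq Tx) as [Eu Ev].
  assert (Ex : Epred Q (supp x)).
  { change (uQ Q (supp x) = vQ Q (supp x)); rewrite Eu, Ev; reflexivity. }
  exists (exist _ _ Ex); split; [reflexivity |].
  unfold suppL; simpl; rewrite <- Ev at 2; rewrite qinv_vQ, supp_uQ; reflexivity.
Qed.

End SupportedQuantalFrame.

Theorem theorem4p6 (A : Frame) (Q : EqSuppQuantalFrame A) :
  (* (1) Q is (canonically) isomorphic to the pushout R(Q) (x)_{T(Q)} L(Q) *)
  ((exists (P : Frame) (i : RQ Q -> P) (j : LQ Q -> P),
      is_pushout (@incTR A Q) (@incTL A Q) i j /\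
      exists phi : P -> Q, frame_iso phi /\
        (forall x, phi (i x) = incRQ x) /\ (forall y, phi (j y) = incLQ y))
   <->
   (* (2) universal property of (Q, R(Q) -> Q, L(Q) -> Q) *)
   pushout_univ (@incTR A Q) (@incTL A Q) (@incRQ A Q) (@incLQ A Q))
  /\
  (pushout_univ (@incTR A Q) (@incTL A Q) (@incRQ A Q) (@incLQ A Q)
   <->
   (* (3) (Q, a |-> a |> 1, a |-> 1 <| a) is the cokernel pair of E -> A *)
   is_pushout (@incEA A Q) (@incEA A Q) (uQ Q) (vQ Q)).
Proof.
  split; split.
  - intros [P [i [j [[_ [_ [_ Hu]]] [phi [phi_iso [Ei Ej]]]]]]].
    exact (pushout_univ_iso Hu phi_iso Ei Ej).
  - intros Hu; exists (Qf Q), incRQ, incLQ; split.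
    + split; [apply frame_hom_val | split; [apply frame_hom_val |]].
      split; [reflexivity | exact Hu].
    + exists (fun x => x); split; [apply frame_iso_id | split; reflexivity].
  - intros Hu; split; [apply uQ_hom | split; [apply vQ_hom | split]].
    + intros e; exact (proj2_sig e).
    + apply (pushout_univ_transfer Hu (suppR_hom Q) (suppL_hom Q)).
      * intros a; exists (uR Q a); apply suppR_uR.
      * intros a; exists (vL Q a); apply suppL_vL.
      * intros x; apply right_sided_eq, (proj2_sig x).
      * intros y; apply left_sided_eq, (proj2_sig y).
      * apply TQ_in_EA.
  - intros [_ [_ [_ Hu]]].
    apply (pushout_univ_transfer Hu (uR_hom Q) (vL_hom Q)).
    + intros x; exists (suppR x); apply uR_suppR.
    + intros y; exists (suppL y); apply vL_suppL.
    + reflexivity.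
    + reflexivity.
    + apply EA_in_TQ.
Qed.
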